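(* Let $S$ be a ground set, let $f$ be a function from subsets of $S$ to subsets of $S$, let $t\ge 1$ be an integer and $u=\lfloor(\frac{t}{2}+1)^2\rfloor$. A set $\mathcal{C}\subseteq S$ is a $t$-parent-identifying scheme under the $f$-channel if and only if there is no minimal forbidden configuration in $\mathcal{C}$ of size at most $u$.
   Context: Here $S$ is $Q^n$ or $2^Q$ for a finite set $Q$. $\mathcal{C}\subseteq S$ is a $t$-parent-identifying scheme under the $f$-channel if for every $\mathcal{C}'\subseteq\mathcal{C}$ with $|\mathcal{C}'|\le t$ and every $d\in f(\mathcal{C}')$, we have $\bigcap_{\mathcal{P}\subseteq\mathcal{C}:\,|\mathcal{P}|\le t,\ d\in f(\mathcal{P})}\mathcal{P}\neq\emptyset$. A configuration in $\mathcal{C}$ is a collection $\mathcal{F}=\{\mathcal{F}_1,\dots,\mathcal{F}_m\}$ of subsets $\mathcal{F}_i\subseteq\mathcal{C}$ with $|\mathcal{F}_i|\le t$ such that $\bigcap_{1\le i\le m}\mathcal{F}_i=\emptyset$; it is minimal if $\bigcap_{j\neq i}\mathcal{F}_j\neq\emptyset$ for every $1\le i\le m$. Its size is $|U(\mathcal{F})|$ where $U(\mathcal{F})=\bigcup_{i}\mathcal{F}_i$. A (minimal) forbidden configuration is a (minimal) configuration with $f(\mathcal{F}_1)\cap\cdots\cap f(\mathcal{F}_m)\neq\emptyset$. *)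

From mathcomp Require Import all_boot.
Set Implicit Arguments. Unset Strict Implicit. Unset Printing Implicit Defensive.

Section IPP.
Variables (S : finType) (f : {set S} -> {set S}) (t : nat).

Definition t_IPP (C : {set S}) : Prop :=
  forall (C' : {set S}), C' \subset C -> #|C'| <= t ->
  forall d, d \in f C' ->
    \bigcap_(P : {set S} | [&& P \subset C, #|P| <= t & d \in f P]) P != set0.

Definition configuration (C : {set S}) (m : nat) (F : 'I_m -> {set S}) : Prop :=
  (forall i, F i \subset C) /\ (forall i, #|F i| <= t) /\
  \bigcap_(i < m) F i = set0.

Definition minimal_configuration (C : {set S}) (m : nat) (F : 'I_m -> {set S}) : Prop :=
  configuration C F /\ forall i : 'I_m, \bigcap_(j < m | j != i) F j != set0.

Definition forbidden (m : nat) (F : 'I_m -> {set S}) : Prop :=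
  \bigcap_(i < m) f (F i) != set0.

Definition config_size (m : nat) (F : 'I_m -> {set S}) : nat :=
  #|\bigcup_(i < m) F i|.

End IPP.

From mathcomp Require Import all_boot zify.

Set Implicit Arguments. Unset Strict Implicit. Unset Printing Implicit Defensive.

(* If C is not t-IPP, some descendant d has parent sets (subsets of C of size
   at most t whose image contains d) with empty common intersection.  A minimal
   subfamily G with empty intersection is then a minimal forbidden
   configuration, and every X in G has a private point w X lying in all other
   members of G but not in X.  The k = |G| private points are distinct and each
   X contains k - 1 of them, so |U(G)| <= k + k (t - k + 1) = k (t + 2 - k),
   which is at most (t + 2)^2 / 4.  Conversely, the members of a forbidden
   configuration with common descendant d are parent sets of d with empty
   intersection, so C cannot be t-IPP. *)

Lemma mul_subn_leq_sqr_div4 k n : k * (n - k) <= n ^ 2 %/ 4.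
Proof.
rewrite leq_divRL //; have [le_kn | /ltnW le_nk] := leqP k n.
  by rewrite -{2}(subnKC le_kn) mulnC nat_AGM2.
by move: le_nk; rewrite -subn_eq0 => /eqP ->; rewrite muln0.
Qed.

Section SetFamilies.

Variable S : finType.
Implicit Types (G Fam : {set {set S}}) (X Y : {set S}).

Lemma leq_card_bigcup (I : finType) (P : pred I) (F : I -> {set S}) :
  #|\bigcup_(i | P i) F i| <= \sum_(i | P i) #|F i|.
Proof.
elim/big_ind2: _ => // [|m U n V leUm leVn]; first by rewrite cards0.
exact: leq_trans (leq_card_setU U V) (leq_add leUm leVn).
Qed.

Lemma exists_minimal_cap0_subfamily Fam :
  \bigcap_(X in Fam) X = set0 ->
  exists2 G : {set {set S}}, G \subset Fam &
    \bigcap_(X in G) X = set0 /\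
    forall X, X \in G -> \bigcap_(Y in G :\ X) Y != set0.
Proof.
move=> capFam0; pose cap0 G := (G \subset Fam) && (\bigcap_(X in G) X == set0).
have [G /minsetP[/andP[sGFam /eqP capG0] minG]] : {G | minset cap0 G}.
  by apply: ex_minset; exists Fam; rewrite /cap0 subxx capFam0 eqxx.
exists G => //; split=> // X XG; apply/negP => /eqP capGX0.
have := minG (G :\ X); rewrite /cap0 capGX0 eqxx subD1set.
rewrite (subset_trans (subD1set G X) sGFam) => /(_ isT isT) /setP /(_ X).
by rewrite !inE eqxx XG.
Qed.

Section PrivatePoints.

Variable G : {set {set S}}.
Hypothesis capG0 : \bigcap_(X in G) X = set0.
Hypothesis capGD1 : forall X, X \in G -> \bigcap_(Y in G :\ X) Y != set0.

(* [x0] only serves as the default value of [pick] outside [G]. *)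
Lemma private_points_exist (x0 : S) :
  exists w : {set S} -> S,
    forall X Y, X \in G -> Y \in G -> (w X \in Y) = (Y != X).
Proof.
pose w X := odflt x0 [pick y in \bigcap_(Y in G :\ X) Y].
have w_capD1 X : X \in G -> w X \in \bigcap_(Y in G :\ X) Y.
  move=> XG; rewrite /w; case: pickP => //= noPick.
  by case/set0Pn: (capGD1 XG) => y; rewrite [_ \in _]noPick.
exists w => X Y XG YG; have [->|neqYX] := eqVneq Y X; last first.
  by move/bigcapP: (w_capD1 X XG); apply; rewrite !inE neqYX.
apply/negP => wX_X; suff : w X \in \bigcap_(Z in G) Z by rewrite capG0 inE.
apply/bigcapP => Z ZG; have [->//|neqZX] := eqVneq Z X.
by move/bigcapP: (w_capD1 X XG); apply; rewrite !inE neqZX.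
Qed.

Variables (w : {set S} -> S) (t : nat).
Hypothesis wP : forall X Y, X \in G -> Y \in G -> (w X \in Y) = (Y != X).
Hypothesis le_G_t : forall X, X \in G -> #|X| <= t.

Lemma card_private_points : #|w @: G| = #|G|.
Proof.
apply: card_in_imset => X Y XG YG eq_w; apply/eqP/negPn.
by rewrite -(wP YG XG) -eq_w wP // eqxx.
Qed.

Lemma card_setI_private_points X : X \in G -> #|G| <= (#|X :&: w @: G|).+1.
Proof.
move=> XG; rewrite -card_private_points (cardsD1 (w X)) imset_f //= ltnS.
apply/subset_leq_card/subsetP => y /setD1P[neq_ywX /imsetP[Y YG eq_y]].
rewrite inE {1}eq_y wP // eq_y imset_f // andbT.
by apply: contraNneq neq_ywX => ->; rewrite eq_y.
Qed.

Lemma card_cover_private_points : #|cover G| <= #|G| * (t + 2 - #|G|).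
Proof.
set W := w @: G; set k := #|G|.
have le_XW X : X \in G -> #|X :\: W| <= t - k.-1.
  move=> XG; rewrite cardsD; apply: leq_sub (le_G_t XG) _.
  by have := card_setI_private_points XG; rewrite -/W -/k; lia.
have le_k_t1 : k <= t.+1.
  have [->//|/card_gt0P[X XG]] := posnP k.
  apply: leq_trans (card_setI_private_points XG) _; rewrite ltnS.
  exact: leq_trans (subset_leq_card (subsetIl X W)) (le_G_t XG).
have sub_cover : cover G \subset W :|: \bigcup_(X in G) (X :\: W).
  apply/subsetP => x /bigcupP[X XG xX]; rewrite inE.
  have [//|xNW] := boolP (x \in W); apply/bigcupP; exists X => //.
  by rewrite inE xNW.
have le_sum : \sum_(X in G) #|X :\: W| <= k * (t - k.-1).
  by rewrite -sum_nat_const; exact: leq_sum.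
apply: leq_trans (subset_leq_card sub_cover) _.
apply: leq_trans (leq_card_setU _ _) _; rewrite card_private_points -/k.
apply: leq_trans (leq_add (leqnn k) (leq_trans (leq_card_bigcup _ _) le_sum)) _.
by rewrite addnC -mulnSr leq_mul2l; apply/orP; right; lia.
Qed.

End PrivatePoints.

Section EnumFamily.

Variable G : {set {set S}}.

Definition enum_family (i : 'I_#|G|) : {set S} := enum_val i.

Lemma enum_familyP i : enum_family i \in G.
Proof. exact: enum_valP. Qed.

Lemma big_enum_family R (idx : R) (op : Monoid.com_law idx) (F : {set S} -> R) :
  \big[op/idx]_(i < #|G|) F (enum_family i) = \big[op/idx]_(X in G) F X.
Proof. by rewrite (big_enum_val F). Qed.

Lemma bigcap_enum_family_neq i :
  \bigcap_(j < #|G| | j != i) enum_family j = \bigcap_(X in G :\ enum_family i) X.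
Proof.
rewrite (eq_bigl (fun X => (X \in G) && (X != enum_family i))); last first.
  by move=> X; rewrite !inE andbC.
rewrite (big_enum_val_cond (fun X => X != enum_family i)).
by apply: eq_bigl => j; rewrite (inj_eq enum_val_inj).
Qed.

End EnumFamily.
End SetFamilies.

Section ParentIdentification.

Variables (S : finType) (f : {set S} -> {set S}) (t : nat) (C : {set S}).

Lemma IPP_not_forbidden m (F : 'I_m -> {set S}) :
  t_IPP f t C -> configuration t C F -> ~ forbidden f F.
Proof.
move=> IPP [FC [Ft capF0]] /set0Pn[d /bigcapP d_fF].
case: m F FC Ft capF0 d_fF => [|m] F FC Ft capF0 d_fF.
  by move/setP/(_ d): capF0; rewrite big_ord0 !inE.
have /set0Pn[x /bigcapP x_parents] := IPP _ (FC ord0) (Ft ord0) d (d_fF ord0 isT).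
suff : x \in \bigcap_(i < m.+1) F i by rewrite capF0 inE.
by apply/bigcapP => i _; apply: x_parents; rewrite FC Ft d_fF.
Qed.

Lemma small_minimal_forbidden_configuration (d : S) :
  \bigcap_(P : {set S} | [&& P \subset C, #|P| <= t & d \in f P]) P = set0 ->
  exists m (F : 'I_m -> {set S}),
    minimal_configuration t C F /\ forbidden f F /\ config_size F <= (t + 2) ^ 2 %/ 4.
Proof.
set parents := [set P : {set S} | [&& P \subset C, #|P| <= t & d \in f P]].
move=> cap0; have /exists_minimal_cap0_subfamily[G sGparents [capG0 capGD1]] :
    \bigcap_(P in parents) P = set0.
  by rewrite -cap0; apply: eq_bigl => P; rewrite inE.
have parentG X : X \in G -> [&& X \subset C, #|X| <= t & d \in f X].
  by move/(subsetP sGparents); rewrite inE.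
have [w wP] := private_points_exist capG0 capGD1 d.
exists #|G|, (@enum_family S G); split; [split; [split; [|split]|] | split].
- by move=> i; case/and3P: (parentG _ (enum_familyP i)).
- by move=> i; case/and3P: (parentG _ (enum_familyP i)).
- by rewrite (big_enum_family _ _ (fun X => X)).
- by move=> i; rewrite bigcap_enum_family_neq capGD1 ?enum_familyP.
- apply/set0Pn; exists d; rewrite big_enum_family; apply/bigcapP => X XG.
  by case/and3P: (parentG X XG).
rewrite /config_size (big_enum_family _ _ (fun X => X)).
apply: leq_trans (card_cover_private_points wP _) (mul_subn_leq_sqr_div4 _ _).
by move=> X /parentG /and3P[].
Qed.

End ParentIdentification.

Theorem proposition1 (S : finType) (f : {set S} -> {set S}) (t : nat)
  (ht : 1 <= t) (C : {set S}) :
  let u := (t + 2) ^ 2 %/ 4 in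
  t_IPP f t C <->
  ~ (exists (m : nat) (F : 'I_m -> {set S}),
        minimal_configuration t C F /\ forbidden f F /\ config_size F <= u).
Proof.
move=> u; split.
  by move=> IPP [m [F [[config _] [forbF _]]]]; exact: IPP_not_forbidden config forbF.
move=> noF C' _ _ d _; apply/negP => /eqP cap0; apply: noF.
exact: small_minimal_forbidden_configuration cap0.
Qed.
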